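(* Let $\mathcal G$ be a topological $2$-group and $X$ a topological space. Let $c$ be a $\mathcal G$-valued Čech cocycle subordinate to an open cover $\mathcal U$ of $X$ and let $d$ be a $\mathcal G$-valued Čech cocycle subordinate to a refinement $\mathcal V$ of $\mathcal U$. Then any $\mathcal G$-bundle morphism $\pi_d\to\pi_c$ decomposes as a composition $\pi_d\to\pi_{c_{|\mathcal V}}\to\pi_c$ of $\mathcal G$-bundle morphisms, where $c_{|\mathcal V}$ is a restriction of $c$ to $\mathcal V$.
   Context: Topological $2$-group $\mathcal G=(\mathcal G_1\rightrightarrows\mathcal G_0)$, $\mathcal E=\mathrm{Ker}(s)$, ${}^xe=1_xe1_{x^{-1}}$. A $\mathcal G$-valued Čech cocycle subordinate to $\mathcal U=\{U_i\}_{i\in I}$ is $c=(\mathbf x,\mathbf e)$ with continuous $\mathbf x_{ij}\colon U_i\cap U_j\to\mathcal G_0$, $\mathbf e_{ijk}\colon U_i\cap U_j\cap U_k\to\mathcal E$, satisfying $t(\mathbf e_{ijk})\mathbf x_{ij}\mathbf x_{jk}=\mathbf x_{ik}$ and $\mathbf e_{ikl}\mathbf e_{ijk}=\mathbf e_{ijl}\,{}^{\mathbf x_{ij}}\mathbf e_{jkl}$. For $\mathcal V=\{V_a\}_{a\in A}$ and a refinement map $\alpha\colon A\to I$ ($V_a\subset U_{\alpha(a)}$), $c_{|\mathcal V,\alpha}$ has components $\mathbf x_{\alpha(a)\alpha(b)}$, $\mathbf e_{\alpha(a)\alpha(b)\alpha(c)}$ restricted. $\pi_c\colon P_c\to\overline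 X$ denotes the principal $\mathcal G$-bundle with objects $(u,x)_i\in\coprod_iU_i\times\mathcal G_0$, morphisms $(v,g)_{ij}\in\coprod_{i,j}(U_i\cap U_j)\times\mathcal G_1$, $s((v,g)_{ij})=(v,s(g))_i$, $t((v,g)_{ij})=(v,\mathbf x_{ij}(v)^{-1}t(g))_j$, $(v,g)_{ij}*(v,h)_{jk}=(v,\mathbf e_{ijk}(v)(g*(1_{\mathbf x_{ij}(v)}h)))_{ik}$ ($g*h=h1_{t(g)^{-1}}g$), right $\mathcal G$-action by right multiplication, projection to $X$. A $\mathcal G$-bundle morphism $\pi\to\pi'$ is a $\mathcal G$-equivariant continuous functor $f$ with $\pi'f=\pi$. *)

From HB Require Import structures.
From mathcomp Require Import all_boot all_order all_algebra.
From mathcomp Require Import all_classical all_reals topology.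
Set Implicit Arguments. Unset Strict Implicit. Unset Printing Implicit Defensive.
Local Open Scope classical_set_scope.

Record topGroup := TopGroup {
  tg_car :> topologicalType;
  tg_one : tg_car;
  tg_mul : tg_car -> tg_car -> tg_car;
  tg_inv : tg_car -> tg_car;
  tg_mulA : forall x y z, tg_mul x (tg_mul y z) = tg_mul (tg_mul x y) z;
  tg_mul1g : forall x, tg_mul tg_one x = x;
  tg_mulg1 : forall x, tg_mul x tg_one = x;
  tg_mulVg : forall x, tg_mul (tg_inv x) x = tg_one;
  tg_mulgV : forall x, tg_mul x (tg_inv x) = tg_one;
  tg_mul_cont : continuous (fun p : tg_car * tg_car => tg_mul p.1 p.2);
  tg_inv_cont : continuous tg_inv }.

Arguments tg_one {_}.
Arguments tg_mul {_}.
Arguments tg_inv {_}.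

(** ** Topological (strict) 2-groups: group objects in topological categories.
    [comp g h] is the categorical composite "g then h" (defined when
    [tgt g = src h]); [unit x] is the identity arrow 1_x. *)
Record twoGroup := TwoGroup {
  G0 : topGroup;
  G1 : topGroup;
  src : G1 -> G0;
  tgt : G1 -> G0;
  unit : G0 -> G1;
  comp : G1 -> G1 -> G1;
  src_mul : forall g h, src (tg_mul g h) = tg_mul (src g) (src h);
  tgt_mul : forall g h, tgt (tg_mul g h) = tg_mul (tgt g) (tgt h);
  unit_mul : forall x y, unit (tg_mul x y) = tg_mul (unit x) (unit y);
  src_cont : continuous src;
  tgt_cont : continuous tgt;
  unit_cont : continuous unit;
  comp_cont : {within [set p : G1 * G1 | tgt p.1 = src p.2],
                 continuous (fun p : G1 * G1 => comp p.1 p.2)};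
  src_unit : forall x, src (unit x) = x;
  tgt_unit : forall x, tgt (unit x) = x;
  src_comp : forall g h, tgt g = src h -> src (comp g h) = src g;
  tgt_comp : forall g h, tgt g = src h -> tgt (comp g h) = tgt h;
  compA : forall g h k, tgt g = src h -> tgt h = src k ->
            comp (comp g h) k = comp g (comp h k);
  comp_unitl : forall g, comp (unit (src g)) g = g;
  comp_unitr : forall g, comp g (unit (tgt g)) = g;
  comp_mul : forall g h g' h', tgt g = src h -> tgt g' = src h' ->
      comp (tg_mul g g') (tg_mul h h') = tg_mul (comp g h) (comp g' h') }.

Arguments src {_}.
Arguments tgt {_}.
Arguments unit {_}.
Arguments comp {_}.

Section Defs.
Variables (G : twoGroup) (X : topologicalType).

Definition conj2 (x : G0 G) (e : G1 G) : G1 G :=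
  tg_mul (tg_mul (unit x) e) (unit (tg_inv x)).

Definition open_cover (I : Type) (U : I -> set X) : Prop :=
  (forall i, open (U i)) /\ (forall v : X, exists i, U i v).

Definition refines (I A : Type) (V : A -> set X) (U : I -> set X) : Prop :=
  forall a, exists i, V a `<=` U i.

(** G-valued Cech cocycle (x, e) subordinate to U; the components are total
    functions on X, only their values on the relevant intersections matter. *)
Definition cocycle (I : Type) (U : I -> set X)
    (x : I -> I -> X -> G0 G) (e : I -> I -> I -> X -> G1 G) : Prop :=
  [/\ (forall i j, {within U i `&` U j, continuous (x i j)}),
      (forall i j k, {within U i `&` U j `&` U k, continuous (e i j k)}),
      (forall i j k v, (U i `&` U j `&` U k) v -> src (e i j k v) = tg_one),
      (forall i j k v, (U i `&` U j `&` U k) v ->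
          tg_mul (tg_mul (tgt (e i j k v)) (x i j v)) (x j k v) = x i k v) &
      (forall i j k l v, (U i `&` U j `&` U k `&` U l) v ->
          tg_mul (e i k l v) (e i j k v)
          = tg_mul (e i j l v) (conj2 (x i j v) (e j k l v)))].

Definition restr_x (I A : Type) (alpha : A -> I) (x : I -> I -> X -> G0 G)
  : A -> A -> X -> G0 G := fun a b => x (alpha a) (alpha b).
Definition restr_e (I A : Type) (alpha : A -> I) (e : I -> I -> I -> X -> G1 G)
  : A -> A -> A -> X -> G1 G := fun a b c => e (alpha a) (alpha b) (alpha c).

(** The disjoint unions
    coprod_i U_i x G0 and coprod_{i,j} (U_i cap U_j) x G1 are realised as
    subspaces of (I discrete) x X x G0 and (I discrete) x (I discrete) x X x G1.
    An object ((i,u),x) is (u,x)_i; a morphism (((i,j),v),g) is (v,g)_{ij}. *)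
Definition Obj (I : choiceType) : topologicalType :=
  (discrete_topology I * X * G0 G)%type.
Definition Mor (I : choiceType) : topologicalType :=
  (discrete_topology I * discrete_topology I * X * G1 G)%type.

Section Bundle.
Variables (I : choiceType) (U : I -> set X)
          (x : I -> I -> X -> G0 G) (e : I -> I -> I -> X -> G1 G).

Definition obj_set : set (Obj I) := [set o | U o.1.1 o.1.2].
Definition mor_set : set (Mor I) :=
  [set m | U m.1.1.1 m.1.2 /\ U m.1.1.2 m.1.2].

Definition bsrc (m : Mor I) : Obj I :=
  let: (((i, j), v), g) := m in ((i, v), src g).
Definition btgt (m : Mor I) : Obj I :=
  let: (((i, j), v), g) := m in ((j, v), tg_mul (tg_inv (x i j v)) (tgt g)).
Definition bcomp (m m' : Mor I) : Mor I :=
  let: (((i, j), v), g) := m in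
  let: (((_, k), _), h) := m' in
  (((i, k), v), tg_mul (e i j k v) (comp g (tg_mul (unit (x i j v)) h))).

Definition bact_obj (o : Obj I) (y : G0 G) : Obj I := (o.1, tg_mul o.2 y).
Definition bact_mor (m : Mor I) (h : G1 G) : Mor I := (m.1, tg_mul m.2 h).

Definition bproj_obj (o : Obj I) : X := o.1.2.
Definition bproj_mor (m : Mor I) : X := m.1.2.

Definition is_identity (m : Mor I) : Prop :=
  [/\ mor_set m, btgt m = bsrc m,
      (forall m', mor_set m' -> bsrc m' = btgt m -> bcomp m m' = m') &
      (forall m', mor_set m' -> btgt m' = bsrc m -> bcomp m' m = m')].
End Bundle.

Definition bundle_morphism (A I : choiceType)
    (V : A -> set X) (xd : A -> A -> X -> G0 G) (ed : A -> A -> A -> X -> G1 G)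
    (U : I -> set X) (xc : I -> I -> X -> G0 G) (ec : I -> I -> I -> X -> G1 G)
    (F0 : Obj A -> Obj I) (F1 : Mor A -> Mor I) : Prop :=
     (forall o, obj_set V o -> obj_set U (F0 o))
  /\ (forall m, mor_set V m -> mor_set U (F1 m))
  /\ {within obj_set V, continuous F0}
  /\ {within mor_set V, continuous F1}
  /\ (forall m, mor_set V m ->
         bsrc (F1 m) = F0 (bsrc m) /\ btgt xc (F1 m) = F0 (btgt xd m))
  /\ (forall m m', mor_set V m -> mor_set V m' -> btgt xd m = bsrc m' ->
         F1 (bcomp xd ed m m') = bcomp xc ec (F1 m) (F1 m'))
  /\ (forall m, is_identity V xd ed m -> is_identity U xc ec (F1 m))
  /\ (forall o y, obj_set V o -> F0 (bact_obj o y) = bact_obj (F0 o) y)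
  /\ (forall m h, mor_set V m -> F1 (bact_mor m h) = bact_mor (F1 m) h)
  /\ (forall o, obj_set V o -> bproj_obj (F0 o) = bproj_obj o)
  /\ (forall m, mor_set V m -> bproj_mor (F1 m) = bproj_mor m).

End Defs.

From Pilot Require Import Defs.
From HB Require Import structures.
From mathcomp Require Import all_boot all_order all_algebra.
From mathcomp Require Import all_classical all_reals topology.

(* A bundle morphism F : P_d -> P_c commutes with the projection and the right
   G-action, so on objects it is determined by where it sends the unit objects
   (u, 1)_a: into some chart beta(a, u) of c, which is locally constant in u
   because F is continuous and chart indices are discrete.  For any such locally
   constant beta, reindexing along beta -- with the gauge x_{alpha(a) beta(a,u)}(u)
   on objects and the corresponding product of cocycle arrows on morphisms --
   is a morphism Q : P_{c|V} -> P_c, functorial by the 2-cocycle identity.  Q is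
   injective on each fibre of the chart data, so P := Q^-1 o F is well defined,
   and it is a bundle morphism P_d -> P_{c|V} because F and Q are. *)

Local Open Scope classical_set_scope.
Declare Scope tg_scope.
Local Notation "x * y" := (tg_mul x y) : tg_scope.
Local Notation "x ^-1" := (tg_inv x) : tg_scope.
Local Notation "\1" := tg_one : tg_scope.
Local Open Scope tg_scope.

Section TopGroupTheory.
Context {T : topGroup}.
Implicit Types x y z : T.

Lemma tg_mulKg x y : x^-1 * (x * y) = y.
Proof. by rewrite tg_mulA tg_mulVg tg_mul1g. Qed.

Lemma tg_mulKVg x y : x * (x^-1 * y) = y.
Proof. by rewrite tg_mulA tg_mulgV tg_mul1g. Qed.

Lemma tg_mulgK x y : x * y * y^-1 = x.
Proof. by rewrite -tg_mulA tg_mulgV tg_mulg1. Qed.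

Lemma tg_mulgKV x y : x * y^-1 * y = x.
Proof. by rewrite -tg_mulA tg_mulVg tg_mulg1. Qed.

Lemma tg_mulgI x y z : x * y = x * z -> y = z.
Proof. by move=> e; rewrite -(tg_mulKg x y) e tg_mulKg. Qed.

Lemma tg_mulIg x y z : y * x = z * x -> y = z.
Proof. by move=> e; rewrite -(tg_mulgK y x) e tg_mulgK. Qed.

Lemma tg_eq_mulgV x y z : x * y = z -> x = z * y^-1.
Proof. by move=> <-; rewrite tg_mulgK. Qed.

Lemma tg_mulg1_eq x y : x * y = \1 -> x^-1 = y.
Proof. by move=> e; apply: (@tg_mulgI x); rewrite e tg_mulgV. Qed.

Lemma tg_invgK x : x^-1^-1 = x.
Proof. by apply: tg_mulg1_eq; rewrite tg_mulVg. Qed.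

Lemma tg_invMg x y : (x * y)^-1 = y^-1 * x^-1.
Proof. by apply: tg_mulg1_eq; rewrite -tg_mulA tg_mulKVg tg_mulgV. Qed.

Lemma tg_invg1 : (\1 : T)^-1 = \1.
Proof. by apply: tg_mulg1_eq; rewrite tg_mulg1. Qed.

End TopGroupTheory.

Section TopGroupMorphism.
Context {T T' : topGroup} {f : T -> T'}.
Hypothesis fM : forall x y, f (x * y) = f x * f y.

Lemma tg_morph1 : f \1 = \1.
Proof. by apply: (@tg_mulgI _ (f \1)); rewrite -fM !tg_mulg1. Qed.

Lemma tg_morphV x : f x^-1 = (f x)^-1.
Proof. by symmetry; apply: tg_mulg1_eq; rewrite -fM tg_mulgV tg_morph1. Qed.

End TopGroupMorphism.

Section TwoGroupTheory.
Context {G : twoGroup}.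
Implicit Types (g h : G1 G) (x : G0 G).

Lemma src1 : src (\1 : G1 G) = \1. Proof. exact: (tg_morph1 (@src_mul G)). Qed.
Lemma tgt1 : tgt (\1 : G1 G) = \1. Proof. exact: (tg_morph1 (@tgt_mul G)). Qed.
Lemma unit1 : unit (\1 : G0 G) = \1. Proof. exact: (tg_morph1 (@unit_mul G)). Qed.
Lemma srcV g : src g^-1 = (src g)^-1. Proof. exact: (tg_morphV (@src_mul G)). Qed.
Lemma tgtV g : tgt g^-1 = (tgt g)^-1. Proof. exact: (tg_morphV (@tgt_mul G)). Qed.
Lemma unitV x : unit x^-1 = (unit x)^-1. Proof. exact: (tg_morphV (@unit_mul G)). Qed.

(* The interchange law forces composition to be the group product, twisted by
   the unit arrow of the middle object. *)
Lemma comp_mulE g h :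
  tgt g = src h -> Defs.comp g h = g * ((unit (tgt g))^-1 * h).
Proof.
move=> gh; set k := (unit (tgt g))^-1 * h.
have src_k : src k = \1 by rewrite src_mul srcV src_unit gh tg_mulVg.
rewrite -{1}(tg_mulKVg (unit (tgt g)) h) -/k -{1}(tg_mulg1 g).
rewrite comp_mul ?src_unit ?tgt1 ?src_k //.
by rewrite comp_unitr -unit1 -src_k comp_unitl.
Qed.

Lemma commute_ker_src_tgt (e f : G1 G) :
  src e = \1 -> tgt f = \1 -> e * f = f * e.
Proof.
move=> se tf.
have ef : Defs.comp (\1 * f) (e * \1) = e * f.
  rewrite comp_mul ?tgt1 ?src1 //.
  by rewrite -unit1 -{1}se comp_unitl -tf comp_unitr.
have fe : Defs.comp (f * \1) (\1 * e) = f * e.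
  rewrite comp_mul ?tgt1 ?src1 //.
  by rewrite -unit1 -{1}tf comp_unitr -se comp_unitl.
by rewrite -ef -fe tg_mul1g tg_mulg1 tg_mul1g tg_mulg1.
Qed.

Lemma conj_unit_tgt (e : G1 G) : src e = \1 ->
  unit (tgt e) * e * (unit (tgt e))^-1 = e.
Proof.
move=> se.
have tgt_ue : tgt ((unit (tgt e))^-1 * e) = \1.
  by rewrite tgt_mul tgtV tgt_unit tg_mulVg.
have := commute_ker_src_tgt _ _ se tgt_ue.
by rewrite !tg_mulA => /tg_mulIg comm; rewrite -tg_mulA comm tg_mulKVg.
Qed.

Lemma conj2E x (e : G1 G) : conj2 x e = unit x * e * (unit x)^-1.
Proof. by rewrite /conj2 unitV. Qed.

End TwoGroupTheory.

(* The morphism (v, g)_{ik} of P_c, re-expressed in the charts j and l, is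
   (v, rechart x e i j k l v * g)_{jl}. *)
Definition rechart {G : twoGroup} {X : topologicalType} {I : Type}
    (x : I -> I -> X -> G0 G) (e : I -> I -> I -> X -> G1 G)
    (i j k l : I) (v : X) : G1 G :=
  (unit (x i j v))^-1 * ((e i j l v)^-1 * e i k l v).

Section CocycleAlgebra.
Context {G : twoGroup} {X : topologicalType} {I : Type}.
Context {U : I -> set X} {x : I -> I -> X -> G0 G} {e : I -> I -> I -> X -> G1 G}.
Hypothesis hc : cocycle U x e.
Variable v : X.

Lemma cocycle_src {i j k} : U i v -> U j v -> U k v -> src (e i j k v) = \1.
Proof. by case: hc => _ _ hs _ _ Ui Uj Uk; apply: hs; split; first split. Qed.

Lemma cocycle_tgt {i j k} : U i v -> U j v -> U k v ->
  tgt (e i j k v) * x i j v * x j k v = x i k v.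
Proof. by case: hc => _ _ _ ht _ Ui Uj Uk; apply: ht; split; first split. Qed.

Lemma cocycle_coh {i j k l} : U i v -> U j v -> U k v -> U l v ->
  e i k l v * e i j k v = e i j l v * conj2 (x i j v) (e j k l v).
Proof.
case: hc => _ _ _ _ hcoh Ui Uj Uk Ul.
by apply: hcoh; split; first split; first split.
Qed.

Lemma cocycle_tgtE {i j k} : U i v -> U j v -> U k v ->
  tgt (e i j k v) = x i k v * (x j k v)^-1 * (x i j v)^-1.
Proof. by move=> Ui Uj Uk; rewrite -(cocycle_tgt Ui Uj Uk) !tg_mulgK. Qed.

Lemma cocycle_jjk j k : U j v -> U k v -> e j j k v = e j j j v.
Proof.
move=> Uj Uk.
have /tg_mulgI := cocycle_coh Uj Uj Uj Uk; rewrite conj2E => coh.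
have tgt_e : tgt (e j j j v) = (x j j v)^-1.
  by rewrite cocycle_tgtE // tg_mulgV tg_mul1g.
have := conj_unit_tgt _ (cocycle_src Uj Uj Uj).
rewrite tgt_e unitV tg_invgK => conj_e.
by rewrite -conj_e coh !tg_mulA tg_mulVg tg_mul1g tg_mulgKV.
Qed.

Lemma cocycle_kjj k j : U j v -> U k v ->
  e k j j v = unit (x k j v) * e j j j v * (unit (x k j v))^-1.
Proof.
by move=> Uj Uk; have /tg_mulgI := cocycle_coh Uk Uj Uj Uj; rewrite conj2E.
Qed.

Lemma src_rechart {i j k l} : U i v -> U j v -> U k v -> U l v ->
  src (rechart x e i j k l v) = (x i j v)^-1.
Proof.
move=> Ui Uj Uk Ul; rewrite !src_mul !srcV src_unit.
by rewrite (cocycle_src Ui Uj Ul) (cocycle_src Ui Uk Ul) tg_invg1 !tg_mulg1.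
Qed.

Lemma tgt_rechart {i j k l} : U i v -> U j v -> U k v -> U l v ->
  tgt (rechart x e i j k l v) = x j l v * (x k l v)^-1 * (x i k v)^-1.
Proof.
move=> Ui Uj Uk Ul; rewrite !tgt_mul !tgtV tgt_unit.
rewrite (cocycle_tgtE Ui Uj Ul) (cocycle_tgtE Ui Uk Ul) !tg_invMg !tg_invgK.
by rewrite !tg_mulA tg_mulVg tg_mul1g tg_mulgKV.
Qed.

Lemma rechart_comp i j k l p q g h :
  U i v -> U j v -> U k v -> U l v -> U p v -> U q v ->
  src h = (x i k v)^-1 * tgt g ->
  rechart x e i j p q v * (e i k p v * Defs.comp g (unit (x i k v) * h)) =
  e j l q v * Defs.comp (rechart x e i j k l v * g)
                        (unit (x j l v) * (rechart x e k l p q v * h)).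
Proof.
move=> Ui Uj Uk Ul Up Uq src_h.
rewrite comp_mulE; last by rewrite src_mul src_unit src_h tg_mulKVg.
rewrite comp_mulE; last first.
  rewrite (tgt_mul (rechart _ _ _ _ _ _ _)) tgt_rechart // (src_mul (unit _)).
  rewrite (src_mul (rechart _ _ _ _ _ _ _)) src_rechart // src_unit src_h.
  by rewrite !tg_mulA.
rewrite (tgt_mul (rechart _ _ _ _ _ _ _)) tgt_rechart //.
set E := unit (x i k v) * ((e k l q v)^-1 * e k p q v) * (unit (x i k v))^-1.
set W := g * (unit (tgt g))^-1.
have coh_ikpq : e i p q v * e i k p v = e i l q v * e i k l v * E.
  rewrite (cocycle_coh Ui Uk Up Uq).
  rewrite (tg_eq_mulgV _ _ _ (esym (cocycle_coh Ui Uk Ul Uq))) !conj2E /E.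
  by rewrite !tg_invMg !tg_invgK !tg_mulA tg_mulgKV.
have coh_ijlq : (e i j q v)^-1 * e i l q v =
    unit (x i j v) * e j l q v * (unit (x i j v))^-1 * (e i j l v)^-1.
  rewrite (tg_eq_mulgV _ _ _ (cocycle_coh Ui Uj Ul Uq)) conj2E.
  by rewrite !tg_mulA tg_mulVg tg_mul1g.
have key : (unit (x i j v))^-1 * ((e i j q v)^-1 * (e i p q v * e i k p v)) =
    e j l q v * (unit (x i j v))^-1 * (e i j l v)^-1 * e i k l v * E.
  rewrite coh_ikpq.
  transitivity ((unit (x i j v))^-1 *
                 ((e i j q v)^-1 * e i l q v * e i k l v * E)).
    by rewrite !tg_mulA.
  by rewrite coh_ijlq !tg_mulA tg_mulVg tg_mul1g.
have src_E : src E = \1.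
  rewrite /E !src_mul !srcV src_unit.
  rewrite (cocycle_src Uk Ul Uq) (cocycle_src Uk Up Uq).
  by rewrite tg_invg1 !tg_mulg1 tg_mulgV.
have tgt_W : tgt W = \1 by rewrite /W tgt_mul tgtV tgt_unit tg_mulgV.
transitivity (e j l q v * (unit (x i j v))^-1 * (e i j l v)^-1 * e i k l v *
              (E * W) * unit (x i k v) * h).
  transitivity ((unit (x i j v))^-1 *
                ((e i j q v)^-1 * (e i p q v * e i k p v)) * W * unit (x i k v) * h).
    by rewrite /rechart /W !tg_mulA.
  by rewrite key !tg_mulA.
rewrite (commute_ker_src_tgt _ _ src_E tgt_W) /W /E /rechart.
by rewrite !unit_mul !unitV !tg_invMg !tg_invgK !tg_mulA !tg_mulgKV tg_mulgK.
Qed.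

Section IdempotentArrow.
(* [g] is the arrow part of an idempotent endomorphism (v, g)_{jj} of P_c. *)
Variables (j : I) (g : G1 G).
Hypotheses (Uj : U j v) (tgt_g : (x j j v)^-1 * tgt g = src g).
Hypothesis g_idem : e j j j v * Defs.comp g (unit (x j j v) * g) = g.

Lemma idempotent_unit : e j j j v * g = unit (src g).
Proof.
rewrite -tgt_g unit_mul unitV.
have := g_idem; rewrite comp_mulE; last first.
  by rewrite src_mul src_unit -tgt_g tg_mulKVg.
move=> idem; apply: (@tg_mulIg _ ((unit (tgt g))^-1 * unit (x j j v))).
apply: (@tg_mulIg _ g); transitivity g; first by rewrite -[RHS]idem !tg_mulA.
by rewrite !tg_mulA tg_mulgK tg_mulVg tg_mul1g.
Qed.

Lemma idempotent_compl k h : U k v -> src h = (x j j v)^-1 * tgt g ->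
  e j j k v * Defs.comp g (unit (x j j v) * h) = h.
Proof.
move=> Uk src_h; rewrite cocycle_jjk // comp_mulE; last first.
  by rewrite src_mul src_unit src_h tg_mulKVg.
rewrite !tg_mulA idempotent_unit -tgt_g unit_mul tg_mulgK -unit_mul tg_mulVg.
by rewrite unit1 tg_mul1g.
Qed.

Lemma idempotent_compr k h : U k v -> (x k j v)^-1 * tgt h = src g ->
  e k j j v * Defs.comp h (unit (x k j v) * g) = h.
Proof.
move=> Uk tgt_h; rewrite comp_mulE; last first.
  by rewrite src_mul src_unit -tgt_h tg_mulKVg.
rewrite cocycle_kjj //; set u := unit (x k j v).
set w := u^-1 * h * (unit (tgt h))^-1 * u.
have tgt_w : tgt w = \1.
  by rewrite /w !tgt_mul !tgtV /u !tgt_unit tg_mulgK tg_mulVg.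
have comm := commute_ker_src_tgt _ _ (cocycle_src Uj Uj Uj) tgt_w.
transitivity (u * (e j j j v * w) * g); first by rewrite /w !tg_mulA.
rewrite comm /w -!tg_mulA idempotent_unit tg_mulKVg /u -unit_mul -tgt_h.
by rewrite tg_mulKVg tg_mulVg tg_mulg1.
Qed.

End IdempotentArrow.
End CocycleAlgebra.

Lemma cocycle_restr {G : twoGroup} {X : topologicalType} {I A : Type}
    {U : I -> set X} {V : A -> set X} {x : I -> I -> X -> G0 G}
    {e : I -> I -> I -> X -> G1 G} {alpha : A -> I} :
  (forall a, V a `<=` U (alpha a)) -> cocycle U x e ->
  cocycle V (restr_x alpha x) (restr_e alpha e).
Proof.
move=> VU [x_cont e_cont e_src e_tgt e_coh]; split.
- move=> a b; apply: continuous_subspaceW (x_cont _ _).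
  by move=> u [/VU Ua /VU Ub].
- move=> a b c; apply: continuous_subspaceW (e_cont _ _ _).
  by move=> u [[/VU Ua /VU Ub] /VU Uc].
- by move=> a b c u [[/VU Ua /VU Ub] /VU Uc]; apply: e_src.
- by move=> a b c u [[/VU Ua /VU Ub] /VU Uc]; apply: e_tgt.
- by move=> a b c d u [[[/VU Ua /VU Ub] /VU Uc] /VU Ud]; apply: e_coh.
Qed.

Lemma idempotent_is_identity {G : twoGroup} {X : topologicalType} {J : choiceType}
    {W : J -> set X} {x : J -> J -> X -> G0 G} {e : J -> J -> J -> X -> G1 G}
    {n : Mor G X J} :
  cocycle W x e -> mor_set W n -> btgt x n = bsrc n -> bcomp x e n n = n ->
  is_identity W x e n.
Proof.
case: n => [[[j j'] v] g] hc [Wj Wj'] /= [ej' tgt_g]; subst j' => -[idem].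
split => //.
- by rewrite /= tgt_g.
- move=> [[[k1 k] v'] h] [W1 W2] /= [ek1 ev src_h].
  subst k1 v'; congr (_, _).
  exact: (idempotent_compl hc).
- move=> [[[k k1] v'] h] [W1 W2] /= [ek1 ev tgt_h].
  subst k1 v'; congr (_, _).
  exact: (idempotent_compr hc).
Qed.

Lemma bcomp_mor_set {G : twoGroup} {X : topologicalType} {J : choiceType}
    (W : J -> set X) (x : J -> J -> X -> G0 G) (e : J -> J -> J -> X -> G1 G)
    (m m' : Mor G X J) :
  mor_set W m -> mor_set W m' -> btgt x m = bsrc m' ->
  mor_set W (bcomp x e m m').
Proof.
by case: m m' => [[[i j] v] g] [[[j' k] v'] h] [Wi _] [_ Wk] [_ ev _]; subst v'.
Qed.

Section Convergence.
Context {T : Type} {F : set_system T} {FF : Filter F}.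

Lemma cvg_fst_of {Y Z : topologicalType} {f : T -> Y * Z} {p : Y * Z} :
  f @ F --> p -> (fun z => (f z).1) @ F --> p.1.
Proof. by move=> fp; apply: cvg_comp fp _; exact: cvg_fst. Qed.

Lemma cvg_snd_of {Y Z : topologicalType} {f : T -> Y * Z} {p : Y * Z} :
  f @ F --> p -> (fun z => (f z).2) @ F --> p.2.
Proof. by move=> fp; apply: cvg_comp fp _; exact: cvg_snd. Qed.

Lemma cvg_pair_of {Y Z : topologicalType} {f : T -> Y} {g : T -> Z}
    {a : Y} {b : Z} :
  f @ F --> a -> g @ F --> b -> (fun z => (f z, g z)) @ F --> (a, b).
Proof. exact: cvg_pair. Qed.

Lemma near_cvg_discrete {K : choiceType} {f : T -> discrete_topology K}
    {k : discrete_topology K} :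
  f @ F --> k -> \forall z \near F, f z = k.
Proof. by move=> fk; apply: (fk [set k]). Qed.

Lemma cvg_tg_mul {Gp : topGroup} {f g : T -> Gp} {a b : Gp} :
  f @ F --> a -> g @ F --> b -> (fun z => f z * g z) @ F --> a * b.
Proof.
move=> fa gb; exact: (continuous2_cvg FF (@tg_mul_cont Gp (a, b)) fa gb).
Qed.

Lemma cvg_tg_inv {Gp : topGroup} {f : T -> Gp} {a : Gp} :
  f @ F --> a -> (fun z => (f z)^-1) @ F --> a^-1.
Proof. move=> fa; exact: (continuous_cvg FF (@tg_inv_cont Gp a) fa). Qed.

Lemma cvg_within_continuous {Y Z : topologicalType} {S : set Y} {f : Y -> Z}
    {q : T -> Y} {y : Y} :
  {within S, continuous f} -> S y -> q @ F --> y ->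
  (\forall z \near F, S (q z)) -> (fun z => f (q z)) @ F --> f y.
Proof.
move=> /subspace_continuousP f_cont Sy qy near_S.
apply: (cvg_comp q f _ (f_cont y Sy)) => P /qy.
by apply: filterS2 near_S => z Sz; apply.
Qed.

Lemma cvg_near_eq {Y : topologicalType} {f g : T -> Y} {l : Y} :
  (\forall z \near F, f z = g z) -> g @ F --> l -> f @ F --> l.
Proof.
by move=> fg gl; apply: cvg_trans gl; apply: near_eq_cvg; apply: filterS fg.
Qed.

End Convergence.

Lemma obj_set_nbhs {G : twoGroup} {X : topologicalType} {J : choiceType}
    (W : J -> set X) (o0 : Obj G X J) :
  let F := within (obj_set W) (nbhs o0) in
  [/\ \forall z \near F, W z.1.1 z.1.2 /\ z.1.1 = o0.1.1,
      (fun z => z.1.2) @ F --> o0.1.2 & (fun z => z.2) @ F --> o0.2].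
Proof.
move=> F; have cvg_z : (fun z => z) @ F --> o0 by apply: cvg_within.
have near_W : \forall z \near F, obj_set W z by apply: near_withinT.
split; last exact: cvg_snd_of cvg_z.
- by apply: filterS2 near_W (near_cvg_discrete (cvg_fst_of (cvg_fst_of cvg_z))).
- exact: cvg_snd_of (cvg_fst_of cvg_z).
Qed.

Lemma mor_set_nbhs {G : twoGroup} {X : topologicalType} {J : choiceType}
    (W : J -> set X) (m0 : Mor G X J) :
  let F := within (mor_set W) (nbhs m0) in
  [/\ \forall z \near F, W z.1.1.1 z.1.2 /\ z.1.1.1 = m0.1.1.1,
      \forall z \near F, W z.1.1.2 z.1.2 /\ z.1.1.2 = m0.1.1.2,
      (fun z => z.1.2) @ F --> m0.1.2 & (fun z => z.2) @ F --> m0.2].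
Proof.
move=> F; have cvg_z : (fun z => z) @ F --> m0 by apply: cvg_within.
have near_W : \forall z \near F, mor_set W z by apply: near_withinT.
split.
- apply: filterS2 near_W (near_cvg_discrete (cvg_fst_of (cvg_fst_of (cvg_fst_of cvg_z)))).
  by move=> z [].
- apply: filterS2 near_W (near_cvg_discrete (cvg_snd_of (cvg_fst_of (cvg_fst_of cvg_z)))).
  by move=> z [].
- exact: cvg_snd_of (cvg_fst_of cvg_z).
- exact: cvg_snd_of cvg_z.
Qed.

Lemma rechart_continuous {G : twoGroup} {X : topologicalType} {I : Type}
    {U : I -> set X} {x : I -> I -> X -> G0 G} {e : I -> I -> I -> X -> G1 G}
    (i j k l : I) :
  cocycle U x e ->
  {within U i `&` U j `&` U k `&` U l, continuous (rechart x e i j k l)}.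
Proof.
case=> x_cont e_cont _ _ _; apply/subspace_continuousP => v Sv.
have cvg_at (Y : topologicalType) (B : set X) (f : X -> Y) :
    {within B, continuous f} -> U i `&` U j `&` U k `&` U l `<=` B ->
    f @ within (U i `&` U j `&` U k `&` U l) (nbhs v) --> f v.
  move=> f_cont sub.
  by move/subspace_continuousP: (continuous_subspaceW sub f_cont); apply.
rewrite /rechart; apply: cvg_tg_mul; last apply: cvg_tg_mul; try apply: cvg_tg_inv.
- apply: (continuous_cvg _ (@unit_cont G _)).
  by apply: cvg_at (x_cont _ _) _ => w [[[]]].
- by apply: cvg_at (e_cont _ _ _) _ => w [[[]]].
- by apply: cvg_at (e_cont _ _ _) _ => w [[[]]].
Qed.

Definition obj_gauge {G : twoGroup} {X : topologicalType} {I A : Type}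
    (xc : I -> I -> X -> G0 G) (alpha : A -> I) (beta : A -> X -> I)
    (a : A) (u : X) : G0 G :=
  xc (alpha a) (beta a u) u.

Definition mor_gauge {G : twoGroup} {X : topologicalType} {I A : Type}
    (xc : I -> I -> X -> G0 G) (ec : I -> I -> I -> X -> G1 G)
    (alpha : A -> I) (beta : A -> X -> I) (a b : A) (v : X) : G1 G :=
  rechart xc ec (alpha a) (beta a v) (alpha b) (beta b v) v.

Definition reindex_obj {G : twoGroup} {X : topologicalType} {I A : choiceType}
    (xc : I -> I -> X -> G0 G) (alpha : A -> I) (beta : A -> X -> I)
    (o : Obj G X A) : Obj G X I :=
  ((beta o.1.1 o.1.2, o.1.2), (obj_gauge xc alpha beta o.1.1 o.1.2)^-1 * o.2).

Definition reindex_mor {G : twoGroup} {X : topologicalType} {I A : choiceType}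
    (xc : I -> I -> X -> G0 G) (ec : I -> I -> I -> X -> G1 G)
    (alpha : A -> I) (beta : A -> X -> I) (m : Mor G X A) : Mor G X I :=
  (((beta m.1.1.1 m.1.2, beta m.1.1.2 m.1.2), m.1.2),
   mor_gauge xc ec alpha beta m.1.1.1 m.1.1.2 m.1.2 * m.2).

Section Reindex.
Context {G : twoGroup} {X : topologicalType} {I A : choiceType}.
Context {U : I -> set X} {V : A -> set X}.
Context {xc : I -> I -> X -> G0 G} {ec : I -> I -> I -> X -> G1 G}.
Context {alpha : A -> I} {beta : A -> X -> I}.
Hypothesis hc : cocycle U xc ec.
Hypothesis alpha_sub : forall {a u}, V a u -> U (alpha a) u.
Hypothesis beta_sub : forall {a u}, V a u -> U (beta a u) u.
Hypothesis beta_cont :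
  forall a, {within V a, continuous (beta a : X -> discrete_topology I)}.

Let xc_cont i j : {within U i `&` U j, continuous (xc i j)}.
Proof. by case: hc. Qed.

Local Notation xr := (restr_x alpha xc).
Local Notation er := (restr_e alpha ec).
Local Notation obj_gauge := (obj_gauge xc alpha beta).
Local Notation mor_gauge := (mor_gauge xc ec alpha beta).
Local Notation reindex_obj := (reindex_obj xc alpha beta).
Local Notation reindex_mor := (reindex_mor xc ec alpha beta).

Lemma src_mor_gauge a b v : V a v -> V b v ->
  src (mor_gauge a b v) = (obj_gauge a v)^-1.
Proof.
move=> Va Vb.
exact: (src_rechart hc _ (alpha_sub Va) (beta_sub Va) (alpha_sub Vb) (beta_sub Vb)).
Qed.

Lemma tgt_mor_gauge a b v : V a v -> V b v ->
  tgt (mor_gauge a b v) =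
  xc (beta a v) (beta b v) v * (obj_gauge b v)^-1 * (xr a b v)^-1.
Proof.
move=> Va Vb.
exact: (tgt_rechart hc _ (alpha_sub Va) (beta_sub Va) (alpha_sub Vb) (beta_sub Vb)).
Qed.

Lemma reindex_obj_set o : obj_set V o -> obj_set U (reindex_obj o).
Proof. by case: o => [[a u] y] /beta_sub. Qed.

Lemma reindex_mor_set m : mor_set V m -> mor_set U (reindex_mor m).
Proof. by case: m => [[[a b] v] g] [/beta_sub Ua /beta_sub Ub]. Qed.

Lemma reindex_src_tgt m : mor_set V m ->
  bsrc (reindex_mor m) = reindex_obj (bsrc m) /\
  btgt xc (reindex_mor m) = reindex_obj (btgt xr m).
Proof.
case: m => [[[a b] v] g] [Va Vb]; split; congr (_, _) => /=.
  by rewrite (src_mul (mor_gauge _ _ _)) src_mor_gauge.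
rewrite (tgt_mul (mor_gauge _ _ _)) tgt_mor_gauge //.
by rewrite !tg_mulA tg_mulVg tg_mul1g.
Qed.

Lemma reindex_comp m m' : mor_set V m -> mor_set V m' -> btgt xr m = bsrc m' ->
  reindex_mor (bcomp xr er m m') = bcomp xc ec (reindex_mor m) (reindex_mor m').
Proof.
case: m => [[[a b] v] g] [Va Vb]; case: m' => [[[b' c] v'] h] [_ Vc] /=.
case=> eb ev src_h; subst b' v'; congr (_, _) => /=.
exact: (rechart_comp hc _ _ _ _ _ _ _ _ _ (alpha_sub Va) (beta_sub Va)
          (alpha_sub Vb) (beta_sub Vb) (alpha_sub Vc) (beta_sub Vc) (esym src_h)).
Qed.

Lemma reindex_identity m :
  is_identity V xr er m -> is_identity U xc ec (reindex_mor m).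
Proof.
move=> [Vm tgt_m idl _]; have idem : bcomp xr er m m = m by apply: idl.
have [src_Qm tgt_Qm] := reindex_src_tgt _ Vm.
apply: idempotent_is_identity hc (reindex_mor_set _ Vm) _ _.
  by rewrite tgt_Qm tgt_m -src_Qm.
by rewrite -reindex_comp // idem.
Qed.

Lemma reindex_act_obj o y :
  reindex_obj (bact_obj o y) = bact_obj (reindex_obj o) y.
Proof. by rewrite /reindex_obj /bact_obj /= tg_mulA. Qed.

Lemma reindex_act_mor m h :
  reindex_mor (bact_mor m h) = bact_mor (reindex_mor m) h.
Proof. by rewrite /reindex_mor /bact_mor /= tg_mulA. Qed.

Lemma reindex_obj_inj o o' :
  o.1 = o'.1 -> reindex_obj o = reindex_obj o' -> o = o'.
Proof. by case: o o' => [o y] [_ y'] /= <- [] /tg_mulgI ->. Qed.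

Lemma reindex_mor_inj m m' :
  m.1 = m'.1 -> reindex_mor m = reindex_mor m' -> m = m'.
Proof. by case: m m' => [m g] [_ g'] /= <- [] /tg_mulgI ->. Qed.

Section Nearness.
Context {T : Type} {F : set_system T} {FF : Filter F}.

Lemma near_charts {p : T -> A} {q : T -> X} {a0 u0} :
  V a0 u0 -> q @ F --> u0 -> (\forall z \near F, V (p z) (q z) /\ p z = a0) ->
  \forall z \near F, [/\ p z = a0, beta (p z) (q z) = beta a0 u0,
                         U (alpha a0) (q z) & U (beta a0 u0) (q z)].
Proof.
move=> Va0 cvg_q near_p.
have near_Va0 : \forall z \near F, V a0 (q z).
  by apply: filterS near_p => z [Vz <-].
have near_beta : \forall z \near F, beta a0 (q z) = beta a0 u0.
  apply: near_cvg_discrete.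
  exact: cvg_within_continuous (beta_cont a0) Va0 cvg_q near_Va0.
apply: filterS3 near_p near_beta near_Va0 => z [_ pz] bz Vz.
rewrite pz bz; split => //; first exact: alpha_sub Vz.
by rewrite -bz; exact: beta_sub Vz.
Qed.

Lemma cvg_obj_gauge {p : T -> A} {q : T -> X} {a0 u0} :
  V a0 u0 -> q @ F --> u0 -> (\forall z \near F, V (p z) (q z) /\ p z = a0) ->
  (fun z => obj_gauge (p z) (q z)) @ F --> obj_gauge a0 u0.
Proof.
move=> Va0 cvg_q near_p.
have near_c := near_charts Va0 cvg_q near_p.
apply: (cvg_near_eq (g := fun z => xc (alpha a0) (beta a0 u0) (q z))).
  by apply: filterS near_c => z [pz bz _ _]; rewrite /obj_gauge bz pz.
apply: cvg_within_continuous (xc_cont _ _) _ cvg_q _.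
  by split; [exact: alpha_sub Va0 | exact: beta_sub Va0].
by apply: filterS near_c => z [].
Qed.

Lemma cvg_mor_gauge {p p' : T -> A} {q : T -> X} {a0 b0 v0} :
  V a0 v0 -> V b0 v0 -> q @ F --> v0 ->
  (\forall z \near F, V (p z) (q z) /\ p z = a0) ->
  (\forall z \near F, V (p' z) (q z) /\ p' z = b0) ->
  (fun z => mor_gauge (p z) (p' z) (q z)) @ F --> mor_gauge a0 b0 v0.
Proof.
move=> Va0 Vb0 cvg_q near_p near_p'.
have near_c := near_charts Va0 cvg_q near_p.
have near_c' := near_charts Vb0 cvg_q near_p'.
apply: (cvg_near_eq (g := fun z => rechart xc ec (alpha a0) (beta a0 v0)
                                              (alpha b0) (beta b0 v0) (q z))).
  by apply: filterS2 near_c near_c' => z [pz bz _ _] [pz' bz' _ _];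
     rewrite /mor_gauge bz bz' pz pz'.
rewrite /mor_gauge.
apply: cvg_within_continuous (rechart_continuous _ _ _ _ hc) _ cvg_q _.
  by split; [split; [split|]|]; [exact: alpha_sub Va0 | exact: beta_sub Va0
                                | exact: alpha_sub Vb0 | exact: beta_sub Vb0].
by apply: filterS2 near_c near_c' => z [_ _ Ua Ub] [_ _ Ua' Ub'].
Qed.

End Nearness.

Lemma reindex_obj_cont : {within obj_set V, continuous reindex_obj}.
Proof.
apply/subspace_continuousP => o0 Vo0.
have [near_a cvg_u cvg_y] := obj_set_nbhs V o0.
apply: cvg_pair_of; first apply: cvg_pair_of => //.
  by apply: cvg_near_cst; apply: filterS (near_charts Vo0 cvg_u near_a) => z [].
apply: cvg_tg_mul cvg_y; apply: cvg_tg_inv.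
exact: cvg_obj_gauge Vo0 cvg_u near_a.
Qed.

Lemma reindex_mor_cont : {within mor_set V, continuous reindex_mor}.
Proof.
apply/subspace_continuousP => m0 [Va0 Vb0].
have [near_a near_b cvg_v cvg_g] := mor_set_nbhs V m0.
apply: cvg_pair_of; first (apply: cvg_pair_of => //; apply: cvg_pair_of).
- by apply: cvg_near_cst; apply: filterS (near_charts Va0 cvg_v near_a) => z [].
- by apply: cvg_near_cst; apply: filterS (near_charts Vb0 cvg_v near_b) => z [].
apply: cvg_tg_mul cvg_g.
exact: cvg_mor_gauge Va0 Vb0 cvg_v near_a near_b.
Qed.

Lemma reindex_bundle_morphism :
  bundle_morphism V xr er U xc ec reindex_obj reindex_mor.
Proof.
split; first exact: reindex_obj_set.
split; first exact: reindex_mor_set.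
split; first exact: reindex_obj_cont.
split; first exact: reindex_mor_cont.
split; first exact: reindex_src_tgt.
split; first exact: reindex_comp.
split; first exact: reindex_identity.
split; first by move=> o y _; exact: reindex_act_obj.
split; first by move=> m h _; exact: reindex_act_mor.
by [].
Qed.

End Reindex.

Definition chart {G : twoGroup} {X : topologicalType} {I A : choiceType}
    (F0 : Obj G X A -> Obj G X I) (a : A) (u : X) : I :=
  (F0 ((a, u), \1)).1.1.

Definition lift_obj {G : twoGroup} {X : topologicalType} {I A : choiceType}
    (xc : I -> I -> X -> G0 G) (alpha : A -> I) (F0 : Obj G X A -> Obj G X I)
    (o : Obj G X A) : Obj G X A :=
  (o.1, obj_gauge xc alpha (chart F0) o.1.1 o.1.2 * (F0 o).2).

Definition lift_mor {G : twoGroup} {X : topologicalType} {I A : choiceType}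
    (xc : I -> I -> X -> G0 G) (ec : I -> I -> I -> X -> G1 G) (alpha : A -> I)
    (F0 : Obj G X A -> Obj G X I) (F1 : Mor G X A -> Mor G X I)
    (m : Mor G X A) : Mor G X A :=
  (m.1, (mor_gauge xc ec alpha (chart F0) m.1.1.1 m.1.1.2 m.1.2)^-1 * (F1 m).2).

Section Lift.
Context {G : twoGroup} {X : topologicalType} {I A : choiceType}.
Context {U : I -> set X} {V : A -> set X}.
Context {xc : I -> I -> X -> G0 G} {ec : I -> I -> I -> X -> G1 G}.
Context {xd : A -> A -> X -> G0 G} {ed : A -> A -> A -> X -> G1 G}.
Context {F0 : Obj G X A -> Obj G X I} {F1 : Mor G X A -> Mor G X I}.
Context {alpha : A -> I}.
Hypothesis hc : cocycle U xc ec.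
Hypothesis hF : bundle_morphism V xd ed U xc ec F0 F1.
Hypothesis alpha_sub : forall a, V a `<=` U (alpha a).

Let F0_set o : obj_set V o -> obj_set U (F0 o).
Proof. by case: hF => h _; apply: h. Qed.
Let F0_cont : {within obj_set V, continuous F0}.
Proof. by case: hF => _ [_ [h _]]; apply: h. Qed.
Let F1_cont : {within mor_set V, continuous F1}.
Proof. by case: hF => _ [_ [_ [h _]]]; apply: h. Qed.
Let F_src_tgt m : mor_set V m ->
  bsrc (F1 m) = F0 (bsrc m) /\ btgt xc (F1 m) = F0 (btgt xd m).
Proof. by case: hF => _ [_ [_ [_ [h _]]]]; apply: h. Qed.
Let F_comp m m' : mor_set V m -> mor_set V m' -> btgt xd m = bsrc m' ->
  F1 (bcomp xd ed m m') = bcomp xc ec (F1 m) (F1 m').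
Proof. by case: hF => _ [_ [_ [_ [_ [h _]]]]]; apply: h. Qed.
Let F_act_obj o y : obj_set V o -> F0 (bact_obj o y) = bact_obj (F0 o) y.
Proof. by case: hF => _ [_ [_ [_ [_ [_ [_ [h _]]]]]]]; apply: h. Qed.
Let F_act_mor m g : mor_set V m -> F1 (bact_mor m g) = bact_mor (F1 m) g.
Proof. by case: hF => _ [_ [_ [_ [_ [_ [_ [_ [h _]]]]]]]]; apply: h. Qed.
Let F_proj_obj o : obj_set V o -> bproj_obj (F0 o) = bproj_obj o.
Proof. by case: hF => _ [_ [_ [_ [_ [_ [_ [_ [_ [h _]]]]]]]]]; apply: h. Qed.

Lemma F0_chartE o :
  obj_set V o -> F0 o = ((chart F0 o.1.1 o.1.2, o.1.2), (F0 o).2).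
Proof.
case: o => [[a u] y] /= Vau.
have -> : (((a, u), y) : Obj G X A) = bact_obj ((a, u), \1) y.
  by rewrite /bact_obj /= tg_mul1g.
rewrite F_act_obj //; have := F_proj_obj ((a, u), \1) Vau.
rewrite /chart /bproj_obj /=.
by case: (F0 _) => [[i u'] y'] /= ->.
Qed.

Lemma chart_sub a u : V a u -> U (chart F0 a u) u.
Proof.
move=> Vau; have := F0_set ((a, u), \1) Vau.
by rewrite (F0_chartE ((a, u), \1) Vau).
Qed.

Lemma chart_cont a :
  {within V a, continuous (chart F0 a : X -> discrete_topology I)}.
Proof.
apply/subspace_continuousP => u0 Vu0; apply: cvg_fst_of; apply: cvg_fst_of.
apply: cvg_within_continuous F0_cont _ _ _ => //.
  apply: cvg_pair_of; last exact: cvg_cst.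
  by apply: cvg_pair_of; [exact: cvg_cst | exact: cvg_within].
exact: near_withinT.
Qed.

Lemma F1_chartE m : mor_set V m ->
  F1 m = (((chart F0 m.1.1.1 m.1.2, chart F0 m.1.1.2 m.1.2), m.1.2), (F1 m).2).
Proof.
case: m => [[[a b] v] g] Vm; have [F_src F_tgt] := F_src_tgt _ Vm.
move: F_src F_tgt; case: Vm => Va Vb.
rewrite (F0_chartE (bsrc _)) // (F0_chartE (btgt _ _)) //=.
by case: (F1 _) => [[[i j] v'] h] /= [-> -> _] [-> _].
Qed.

Local Notation xr := (restr_x alpha xc).
Local Notation er := (restr_e alpha ec).
Local Notation Q0 := (reindex_obj xc alpha (chart F0)).
Local Notation Q1 := (reindex_mor xc ec alpha (chart F0)).
Local Notation P0 := (lift_obj xc alpha F0).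
Local Notation P1 := (lift_mor xc ec alpha F0 F1).

Let Q0_inj := reindex_obj_inj (xc := xc) (alpha := alpha) (beta := chart F0).
Let Q1_inj := reindex_mor_inj (xc := xc) (ec := ec) (alpha := alpha) (beta := chart F0).

Lemma reindex_lift_obj o : obj_set V o -> Q0 (P0 o) = F0 o.
Proof.
by move=> Vo; rewrite [RHS](F0_chartE o Vo) /reindex_obj /lift_obj /= tg_mulKg.
Qed.

Lemma reindex_lift_mor m : mor_set V m -> Q1 (P1 m) = F1 m.
Proof.
by move=> Vm; rewrite [RHS](F1_chartE m Vm) /reindex_mor /lift_mor /= tg_mulKVg.
Qed.

Lemma lift_src_tgt m : mor_set V m ->
  bsrc (P1 m) = P0 (bsrc m) /\ btgt xr (P1 m) = P0 (btgt xd m).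
Proof.
move=> Vm; have [F_src F_tgt] := F_src_tgt m Vm.
have [Q_src Q_tgt] := reindex_src_tgt hc alpha_sub chart_sub (P1 m) Vm.
case: m Vm F_src F_tgt Q_src Q_tgt => [[[a b] v] g] [Va Vb] F_src F_tgt Q_src Q_tgt.
split; apply: Q0_inj => //.
  by rewrite -Q_src reindex_lift_mor // F_src reindex_lift_obj.
by rewrite -Q_tgt reindex_lift_mor // F_tgt reindex_lift_obj.
Qed.

Lemma lift_comp m m' : mor_set V m -> mor_set V m' -> btgt xd m = bsrc m' ->
  P1 (bcomp xd ed m m') = bcomp xr er (P1 m) (P1 m').
Proof.
move=> Vm Vm' mm'.
have [_ P_tgt] := lift_src_tgt m Vm; have [P_src' _] := lift_src_tgt m' Vm'.
have Pmm' : btgt xr (P1 m) = bsrc (P1 m') by rewrite P_tgt P_src' mm'.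
apply: Q1_inj.
  by case: m m' {Vm Vm' mm' P_tgt P_src' Pmm'} => [[[? ?] ?] ?] [[[? ?] ?] ?].
rewrite reindex_lift_mor; last exact: bcomp_mor_set.
rewrite F_comp // (reindex_comp hc alpha_sub chart_sub (P1 m) (P1 m') Vm Vm' Pmm').
by rewrite !reindex_lift_mor.
Qed.

Lemma lift_identity m : is_identity V xd ed m -> is_identity V xr er (P1 m).
Proof.
move=> [Vm tgt_m idl _]; have idem : bcomp xd ed m m = m by apply: idl.
have [src_P tgt_P] := lift_src_tgt m Vm.
apply: (idempotent_is_identity (cocycle_restr alpha_sub hc)) => //.
  by rewrite tgt_P tgt_m -src_P.
by rewrite -lift_comp // idem.
Qed.

Lemma lift_act_obj o y : obj_set V o -> P0 (bact_obj o y) = bact_obj (P0 o) y.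
Proof.
move=> Vo; apply: Q0_inj => //.
by rewrite reindex_lift_obj // F_act_obj // -reindex_lift_obj // reindex_act_obj.
Qed.

Lemma lift_act_mor m g : mor_set V m -> P1 (bact_mor m g) = bact_mor (P1 m) g.
Proof.
move=> Vm; apply: Q1_inj => //.
by rewrite reindex_lift_mor // F_act_mor // -reindex_lift_mor // reindex_act_mor.
Qed.

Lemma lift_obj_cont : {within obj_set V, continuous P0}.
Proof.
apply/subspace_continuousP => o0 Vo0.
have [near_a cvg_u _] := obj_set_nbhs V o0.
have cvg_z : (fun z => z) @ within (obj_set V) (nbhs o0) --> o0.
  exact: cvg_within.
apply: cvg_pair_of (cvg_fst_of cvg_z) _; apply: cvg_tg_mul.
  exact: (cvg_obj_gauge hc alpha_sub chart_sub chart_cont Vo0 cvg_u near_a).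
by apply: cvg_snd_of; move/subspace_continuousP: F0_cont; apply.
Qed.

Lemma lift_mor_cont : {within mor_set V, continuous P1}.
Proof.
apply/subspace_continuousP => m0 Vm0; have [Va0 Vb0] := Vm0.
have [near_a near_b cvg_v _] := mor_set_nbhs V m0.
have cvg_z : (fun z => z) @ within (mor_set V) (nbhs m0) --> m0.
  exact: cvg_within.
apply: cvg_pair_of (cvg_fst_of cvg_z) _; apply: cvg_tg_mul.
  apply: cvg_tg_inv.
  exact: (cvg_mor_gauge hc alpha_sub chart_sub chart_cont Va0 Vb0 cvg_v near_a near_b).
by apply: cvg_snd_of; move/subspace_continuousP: F1_cont; apply.
Qed.

Lemma lift_bundle_morphism : bundle_morphism V xd ed V xr er P0 P1.
Proof.
split; first by [].
split; first by [].
split; first exact: lift_obj_cont.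
split; first exact: lift_mor_cont.
split; first exact: lift_src_tgt.
split; first exact: lift_comp.
split; first exact: lift_identity.
split; first exact: lift_act_obj.
split; first exact: lift_act_mor.
by [].
Qed.

End Lift.

Theorem lemma8 (G : twoGroup) (X : topologicalType) (I A : choiceType)
    (U : I -> set X) (V : A -> set X)
    (xc : I -> I -> X -> G0 G) (ec : I -> I -> I -> X -> G1 G)
    (xd : A -> A -> X -> G0 G) (ed : A -> A -> A -> X -> G1 G)
    (hU : open_cover U) (hV : open_cover V) (hVU : refines V U)
    (hc : cocycle U xc ec) (hd : cocycle V xd ed)
    (F0 : Obj G X A -> Obj G X I) (F1 : Mor G X A -> Mor G X I)
    (hF : bundle_morphism V xd ed U xc ec F0 F1) :
  exists alpha : A -> I, (forall a, V a `<=` U (alpha a)) /\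
  exists (P0 : Obj G X A -> Obj G X A) (P1 : Mor G X A -> Mor G X A)
         (Q0 : Obj G X A -> Obj G X I) (Q1 : Mor G X A -> Mor G X I),
    [/\ bundle_morphism V xd ed V (restr_x alpha xc) (restr_e alpha ec) P0 P1,
        bundle_morphism V (restr_x alpha xc) (restr_e alpha ec) U xc ec Q0 Q1,
        (forall o, obj_set V o -> F0 o = Q0 (P0 o)) &
        (forall m, mor_set V m -> F1 m = Q1 (P1 m))].
Proof.
have [alpha alpha_sub] := choice hVU.
exists alpha; split => //.
exists (lift_obj xc alpha F0), (lift_mor xc ec alpha F0 F1).
exists (reindex_obj xc alpha (chart F0)), (reindex_mor xc ec alpha (chart F0)).
split.
- exact: lift_bundle_morphism hc hF alpha_sub.
- exact: reindex_bundle_morphism hc alpha_sub (chart_sub hF) (chart_cont hF).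
- by move=> o Vo; rewrite (reindex_lift_obj hF).
- by move=> m Vm; rewrite (reindex_lift_mor hF).
Qed.
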